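(* Let $\ell$ be a label and $\rho_1,\rho_{21},\rho_{22}$ rows such that $\rho_{21}\odot\rho_{22}$ is defined. If $\rho_1 \simeq \rho_{21}\odot\rho_{22}$, $\rho_1$ ends with $\star$, and $\ell\notin\mathit{dom}(\rho_1)$, then $\rho_1 \simeq \rho_{21}\odot(\ell{:}A;\cdot)\odot\rho_{22}$ for every type $A$.
   Context: Types and rows share one grammar: $A,B,C,\rho ::= X \mid \alpha \mid \star \mid \iota \mid A\to B \mid \forall X{:}K.\,A \mid [\rho] \mid \langle\rho\rangle \mid \cdot \mid \ell{:}A;\rho$, where $X$ ranges over type variables (bound by $\forall$), $\alpha$ over type names, $\star$ is the dynamic type (also serving as the dynamic row), $\iota$ over base types, $[\rho]$ and $\langle\rho\rangle$ are record and variant types, $\cdot$ is the empty row, $\ell$ ranges over labels, and $K\in\{\mathsf T,\mathsf R\}$ is a kind. Types are identified up to renaming of bound variables; $\mathit{ftv}(A)$ is the set of free type variables. Row matching $\rho \triangleright_\ell A,\rho'$ is defined by: $(\ell{:}A;\rho)\triangleright_\ell A,\rho$; if $\ell'\neq\ell$ and $\rho\triangleright_\ell A,\rho'$ then $(\ell'{:}B;\rho)\triangleright_\ell A,(\ell'{:}B;\rho')$; and $\star\triangleright_\ell \star,\star$. $\mathbf{QPoly}(A)$ holds iff $A$ is not of the form $\forall X{:}K.\,B$ and $\star$ occurs in $A$. Row concatenation $\rho_1\odot\rho_2$ is defined only when $\rho_1=\ell_1{:}A_1;\dots;\ell_n{:}A_n;\cdot$, and then equals $\ell_1{:}A_1;\dots;\ell_n{:}A_n;\rho_2$.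 $\mathit{dom}(\rho)$ is the set of labels in the top-level label prefix of $\rho$. A row $\rho$ ends with $\star$ if $\rho=\rho'\odot\star$ for some $\rho'$. Consistency $\simeq$ is defined inductively: $A\simeq A$; $\star\simeq A$; $A\simeq\star$; $A_1\to A_2\simeq B_1\to B_2$ if $A_1\simeq B_1$ and $A_2\simeq B_2$; $\forall X{:}K.A\simeq\forall X{:}K.B$ if $A\simeq B$; $\forall X{:}K.A\simeq B$ if $\mathbf{QPoly}(B)$, $X\notin\mathit{ftv}(B)$ and $A\simeq B$; $A\simeq\forall X{:}K.B$ if $\mathbf{QPoly}(A)$, $X\notin\mathit{ftv}(A)$ and $A\simeq B$; $[\rho_1]\simeq[\rho_2]$ and $\langle\rho_1\rangle\simeq\langle\rho_2\rangle$ if $\rho_1\simeq\rho_2$; $\ell{:}A;\rho_1\simeq B$ if $B\triangleright_\ell B',\rho_2$, $A\simeq B'$ and $\rho_1\simeq\rho_2$; $A\simeq \ell{:}B;\rho_2$ if $A\triangleright_\ell A',\rho_1$, $A'\simeq B$ and $\rho_1\simeq\rho_2$. *)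

From Stdlib Require Import List.
Import ListNotations.

Definition label := nat.

Inductive kind := KType | KRow.

(* Types and rows share one grammar.  Type variables X are de Bruijn indices
   (bound by TAll), so types are identified up to renaming of bound variables. *)
Inductive ty : Type :=
| TVar   (n : nat)
| TName  (a : nat)
| TDyn                        (* star : dynamic type / dynamic row *)
| TBase  (i : nat)
| TArr   (A B : ty)
| TAll   (K : kind) (A : ty)  (* forall X:K. A   (X = index 0 in A) *)
| TRecd  (r : ty)
| TVariant (r : ty)
| TEmpty
| TCons  (l : label) (A : ty) (r : ty).

Fixpoint shift (c : nat) (t : ty) : ty :=
  match t with
  | TVar n => if Nat.leb c n then TVar (S n) else TVar n
  | TName a => TName a
  | TDyn => TDyn
  | TBase i => TBase i
  | TArr A B => TArr (shift c A) (shift c B)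
  | TAll K A => TAll K (shift (S c) A)
  | TRecd r => TRecd (shift c r)
  | TVariant r => TVariant (shift c r)
  | TEmpty => TEmpty
  | TCons l A r => TCons l (shift c A) (shift c r)
  end.

Fixpoint has_dyn (t : ty) : bool :=
  match t with
  | TDyn => true
  | TArr A B => has_dyn A || has_dyn B
  | TAll _ A => has_dyn A
  | TRecd r | TVariant r => has_dyn r
  | TCons _ A r => has_dyn A || has_dyn r
  | _ => false
  end.

Definition is_forall (t : ty) : Prop :=
  match t with TAll _ _ => True | _ => False end.

Definition QPoly (t : ty) : Prop := ~ is_forall t /\ has_dyn t = true.

Inductive rmatch : ty -> label -> ty -> ty -> Prop :=
| RM_head : forall l A r, rmatch (TCons l A r) l A r
| RM_skip : forall l l' A B r r', l' <> l -> rmatch r l A r' ->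
    rmatch (TCons l' B r) l A (TCons l' B r')
| RM_dyn : forall l, rmatch TDyn l TDyn TDyn.

(* consistency.  In the forall/QPoly rules, the side condition X notin ftv(B)
   is expressed in de Bruijn form by comparing the body A with (shift 0 B). *)
Inductive consistent : ty -> ty -> Prop :=
| C_refl : forall A, consistent A A
| C_dynL : forall A, consistent TDyn A
| C_dynR : forall A, consistent A TDyn
| C_arr : forall A1 A2 B1 B2, consistent A1 B1 -> consistent A2 B2 ->
    consistent (TArr A1 A2) (TArr B1 B2)
| C_all : forall K A B, consistent A B -> consistent (TAll K A) (TAll K B)
| C_allL : forall K A B, QPoly B -> consistent A (shift 0 B) ->
    consistent (TAll K A) B
| C_allR : forall K A B, QPoly A -> consistent (shift 0 A) B ->
    consistent A (TAll K B)
| C_rec : forall r1 r2, consistent r1 r2 -> consistent (TRecd r1) (TRecd r2)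
| C_var : forall r1 r2, consistent r1 r2 ->
    consistent (TVariant r1) (TVariant r2)
| C_consL : forall l A r1 B B' r2, rmatch B l B' r2 ->
    consistent A B' -> consistent r1 r2 -> consistent (TCons l A r1) B
| C_consR : forall l A A' r1 B r2, rmatch A l A' r1 ->
    consistent A' B -> consistent r1 r2 -> consistent A (TCons l B r2).

Fixpoint rconcat (r1 r2 : ty) : option ty :=
  match r1 with
  | TEmpty => Some r2
  | TCons l A r => option_map (TCons l A) (rconcat r r2)
  | _ => None
  end.

Fixpoint dom (r : ty) : list label :=
  match r with
  | TCons l _ r' => l :: dom r'
  | _ => []
  end.

Definition ends_with_dyn (r : ty) : Prop := exists r', rconcat r' TDyn = Some r.

Definition obind (o : option ty) (f : ty -> option ty) : option ty :=
  match o with Some x => f x | None => None end.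

(** Since
    [rho1] ends with [star] and does not mention [l], matching [rho1] against
    [l] yields [star] and leaves [rho1] unchanged; so wherever the consistency
    derivation reaches the insertion point, the new field is absorbed by a
    [C_consR] step whose field premise is [star ~ A].  Elsewhere the insertion
    commutes with matching on the other labels, and the derivation is rebuilt
    around it. *)

From Stdlib Require Import List.

Inductive dyn_row : ty -> Prop :=
| dyn_row_dyn : dyn_row TDyn
| dyn_row_cons l B r : dyn_row r -> dyn_row (TCons l B r).

Lemma dyn_row_of_ends_with_dyn r : ends_with_dyn r -> dyn_row r.
Proof.
  intros [p Hp]; revert r Hp.
  induction p as [| | | | | | | | | l B _ p IHp]; intros r Hp; try discriminate.
  - injection Hp as <-; constructor.
  - simpl in Hp; destruct (rconcat p TDyn) eqn:Ep; try discriminate.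
    injection Hp as <-; constructor; apply IHp; reflexivity.
Qed.

Lemma rmatch_dyn_row_absent l r :
  dyn_row r -> ~ In l (dom r) -> rmatch r l TDyn r.
Proof.
  intros Hd; induction Hd as [| l' B r _ IH]; intros Hn; constructor.
  - intros ->; apply Hn; left; reflexivity.
  - apply IH; intros Hin; apply Hn; right; exact Hin.
Qed.

Lemma rmatch_dyn_row r l B r' : rmatch r l B r' -> dyn_row r -> dyn_row r'.
Proof.
  induction 1 as [| ? ? ? ? ? ? _ _ IH |]; intros Hd; inversion Hd; subst.
  - assumption.
  - constructor; auto.
  - constructor.
Qed.

Lemma rmatch_dom_incl r l B r' : rmatch r l B r' -> incl (dom r') (dom r).
Proof.
  induction 1; simpl.
  - apply incl_tl, incl_refl.
  - apply incl_cons; [left; reflexivity | apply incl_tl; assumption].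
  - apply incl_refl.
Qed.

Section Insertion.

Variables (l : label) (A : ty).

Inductive row_insert : ty -> ty -> Prop :=
| row_insert_here s : row_insert s (TCons l A s)
| row_insert_skip l' B s t :
    row_insert s t -> row_insert (TCons l' B s) (TCons l' B t).

Lemma rconcat_row_insert r21 r22 r2 :
  rconcat r21 r22 = Some r2 ->
  exists r, obind (rconcat r21 (TCons l A TEmpty)) (fun r' => rconcat r' r22)
              = Some r
            /\ row_insert r2 r.
Proof.
  revert r2; induction r21 as [| | | | | | | | | l' B _ r21 IH]; intros r2 H;
    try discriminate.
  - injection H as <-; eexists; split; [reflexivity | constructor].
  - simpl in H; destruct (rconcat r21 r22) as [r2'|] eqn:E; try discriminate.
    injection H as <-.
    destruct (IH r2' eq_refl) as (r & Hr & Hins); simpl.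
    destruct (rconcat r21 (TCons l A TEmpty)); try discriminate; simpl in *.
    rewrite Hr; eexists; split; [reflexivity | constructor; exact Hins].
Qed.

Lemma rmatch_row_insert s t l' B r :
  row_insert s t -> rmatch s l' B r -> l' <> l ->
  exists r', rmatch t l' B r' /\ row_insert r r'.
Proof.
  intros Hins; revert r; induction Hins as [s | l0 B0 s t Hins IH];
    intros r Hm Hne.
  - exists (TCons l A r); split; constructor; auto.
  - inversion Hm as [| ? ? ? ? ? ? Hne0 Hm0 | ]; subst.
    + exists t; split; [constructor | exact Hins].
    + destruct (IH _ Hm0 Hne) as (t' & Hm' & Hins').
      exists (TCons l0 B0 t'); split; constructor; assumption.
Qed.

Lemma consistent_cons_absentR r1 s :
  dyn_row r1 -> ~ In l (dom r1) -> consistent r1 s ->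
  consistent r1 (TCons l A s).
Proof.
  intros Hd Hn Hc.
  eapply C_consR; [apply rmatch_dyn_row_absent; assumption | constructor | exact Hc].
Qed.

Lemma consistent_row_insert_refl s t :
  row_insert s t -> dyn_row s -> ~ In l (dom s) -> consistent s t.
Proof.
  induction 1 as [s | l' B s t _ IH]; intros Hd Hn.
  - apply consistent_cons_absentR; [assumption | assumption | constructor].
  - inversion Hd; subst; simpl in Hn.
    eapply C_consR; [constructor | constructor |].
    apply IH; [assumption | intros Hin; apply Hn; right; exact Hin].
Qed.

Lemma consistent_row_insert r1 s t :
  consistent r1 s -> dyn_row r1 -> ~ In l (dom r1) ->
  row_insert s t -> consistent r1 t.
Proof.
  intros Hc; revert t.
  induction Hc as [s | s | r1 | | | | K r1 B Hq Hc _ | | |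
                   l0 A0 r1 s B' r2 Hm HA _ _ IH
                 | l0 r1 A' r1' B r2 Hm HA _ Hc IH];
    intros t Hd Hn Hins; try solve [inversion Hd].
  - exact (consistent_row_insert_refl s t Hins Hd Hn).
  - constructor.
  - inversion Hins; subst.
    apply consistent_cons_absentR; [assumption | assumption | constructor].
  - inversion Hins; subst.
    apply consistent_cons_absentR; [assumption | assumption |].
    apply C_allR; assumption.
  - inversion Hd; subst; simpl in Hn.
    assert (Hne : l0 <> l) by (intros Heq; apply Hn; left; exact Heq).
    destruct (rmatch_row_insert _ _ _ _ _ Hins Hm Hne) as (t' & Hm' & Hins').
    eapply C_consL; [exact Hm' | exact HA |].
    apply IH; [assumption | intros Hin; apply Hn; right; exact Hin | exact Hins'].
  - inversion Hins as [| ? ? ? t' Hins']; subst.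
    + apply consistent_cons_absentR; [assumption | assumption |].
      exact (C_consR _ _ _ _ _ _ Hm HA Hc).
    + eapply C_consR; [exact Hm | exact HA |].
      apply IH; [eapply rmatch_dyn_row; eassumption | | exact Hins'].
      intros Hin; apply Hn, (rmatch_dom_incl _ _ _ _ Hm), Hin.
Qed.

End Insertion.

Theorem mainTheorem11 :
  forall (l : label) (r1 r21 r22 r2 : ty),
    rconcat r21 r22 = Some r2 ->
    consistent r1 r2 ->
    ends_with_dyn r1 ->
    ~ In l (dom r1) ->
    forall A : ty,
      exists r, obind (rconcat r21 (TCons l A TEmpty)) (fun r' => rconcat r' r22) = Some r
                /\ consistent r1 r.
Proof.
  intros l r1 r21 r22 r2 Hconcat Hc Hend Hn A.
  destruct (rconcat_row_insert l A r21 r22 r2 Hconcat) as (r & Hr & Hins).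
  exists r; split; [exact Hr |].
  exact (consistent_row_insert l A r1 r2 r Hc (dyn_row_of_ends_with_dyn r1 Hend) Hn Hins).
Qed.
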